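(* Let $A, B_1, \ldots, B_m \in \mathbb{C}^{d\times d}$ and let $D_{A,B}=\overline{A}\otimes A+\sum_{k=1}^m \overline{B}_k\otimes B_k$, $C_{A,B}=\overline{A}\otimes I+I\otimes A+\sum_{k=1}^m \overline{B}_k\otimes B_k$, $N_{A,B}=A^*A+\sum_{k=1}^m B_k^*B_k$, $M_{A,B}=A+A^*+\sum_{k=1}^m B_k^*B_k$. If $N_{A,B}=\beta I$ for a scalar $\beta$, then $\rho(D_{A,B})=\beta$. If $M_{A,B}=\beta I$ for a scalar $\beta$, then $\alpha(C_{A,B})=\beta$.
   Context: $\overline{X}$ denotes entrywise complex conjugate, $X^*$ conjugate transpose, $I$ the identity, $\otimes$ the Kronecker product. For a square matrix $X$, $\rho(X)=\max\{|\lambda|\}$ over eigenvalues $\lambda$ of $X$ (spectral radius) and $\alpha(X)=\max\{\operatorname{Re}\lambda\}$ over eigenvalues $\lambda$ of $X$ (spectral abscissa). *)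

From HB Require Import structures.
From mathcomp Require Import all_boot all_order all_algebra.
From mathcomp Require Export mxtens.
Set Implicit Arguments. Unset Strict Implicit. Unset Printing Implicit Defensive.
Import Order.TTheory GRing.Theory Num.Theory.
Local Open Scope ring_scope.

(* Complex scalars: an arbitrary numClosedFieldType C (e.g. the complex numbers),
   which comes with complex conjugation z^* and real/imaginary parts. *)

Definition mxconj {C : numClosedFieldType} {m n : nat} (X : 'M[C]_(m, n)) : 'M[C]_(m, n) :=
  map_mx (@Num.conj C) X.

Definition mxadj {C : numClosedFieldType} {m n : nat} (X : 'M[C]_(m, n)) : 'M[C]_(n, m) :=
  (mxconj X)^T.

Definition is_max_over_spectrum {C : numClosedFieldType} {n : nat}
  (f : C -> C) (X : 'M[C]_n) (r : C) : Prop :=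
  (exists2 l, eigenvalue X l & f l = r) /\
  (forall l, eigenvalue X l -> f l <= r).

Definition spectral_radius_is {C : numClosedFieldType} {n : nat} (X : 'M[C]_n) (r : C) :=
  is_max_over_spectrum (fun l => `|l|) X r.

Definition spectral_abscissa_is {C : numClosedFieldType} {n : nat} (X : 'M[C]_n) (r : C) :=
  is_max_over_spectrum (fun l => 'Re l) X r.

Definition D_AB {C : numClosedFieldType} {d m : nat} (A : 'M[C]_d) (B : 'I_m -> 'M[C]_d)
  : 'M[C]_(d * d) :=
  mxconj A *t A + \sum_(k < m) mxconj (B k) *t B k.

Definition C_AB {C : numClosedFieldType} {d m : nat} (A : 'M[C]_d) (B : 'I_m -> 'M[C]_d)
  : 'M[C]_(d * d) :=
  mxconj A *t 1%:M + 1%:M *t A + \sum_(k < m) mxconj (B k) *t B k.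

Definition N_AB {C : numClosedFieldType} {d m : nat} (A : 'M[C]_d) (B : 'I_m -> 'M[C]_d)
  : 'M[C]_d :=
  mxadj A *m A + \sum_(k < m) mxadj (B k) *m B k.

Definition M_AB {C : numClosedFieldType} {d m : nat} (A : 'M[C]_d) (B : 'I_m -> 'M[C]_d)
  : 'M[C]_d :=
  A + mxadj A + \sum_(k < m) mxadj (B k) *m B k.

From mathcomp Require Import all_boot all_order all_algebra.
From mathcomp Require Import mxtens.
From mathcomp Require Import sesquilinear spectral.
From mathcomp Require Import ring.
Import Order.TTheory GRing.Theory Num.Theory.
Set Implicit Arguments. Unset Strict Implicit. Unset Printing Implicit Defensive.
Local Open Scope ring_scope.

(* On vectorized matrices v = vec Y, D_AB and C_AB act as
   Y |-> A^* Y A + sum_k B_k^* Y B_k and Y |-> A^* Y + Y A + sum_k B_k^* Y B_k,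
   so Y = I is an eigenvector for beta.  Conversely, pair the eigen-equation of
   an eigenvector Y for l with a top left singular vector u of Y
   (u Y Y^* = s u, |u| = 1 and |x Y|^2 <= s |x|^2 for all x):
   by Cauchy-Schwarz and AM-GM each term obeys
   |<u X^* Y X, u Y>| <= (s |u X^*|^2 + |u Y X^*|^2) / 2, and summing the terms
   against N_AB = beta I (resp. M_AB = beta I) evaluated at u and at u Y bounds
   |l| s (resp. Re(l) s) by beta s. *)

Lemma index_allpairs_pair (T1 T2 : eqType) (s1 : seq T1) (s2 : seq T2) x1 x2 :
  x1 \in s1 -> x2 \in s2 ->
  index (x1, x2) [seq (y1, y2) | y1 <- s1, y2 <- s2]
    = (index x1 s1 * size s2 + index x2 s2)%N.
Proof.
move=> + x2s2; elim: s1 => //= y1 s1 IHs1.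
rewrite inE index_cat; have [->|x1y1] /= := eqVneq x1 y1.
  by rewrite mem_map ?x2s2 ?index_map //; move=> ? ? [].
move=> /IHs1 ->; rewrite ifN; last first.
  by apply/mapP => -[y2 _ [/eqP]]; rewrite (negPf x1y1).
by rewrite size_map mulSn addnA.
Qed.

Lemma mxvec_mxtens_index m n (i : 'I_m) (j : 'I_n) :
  mxvec_index i j = mxtens_index (i, j).
Proof.
apply: val_inj => /=.
rewrite /enum_rank [enum_rank_in]unlock insubdK; last first.
  by rewrite -topredE /= cardE index_mem mem_enum.
rewrite enumT unlock /= /prod_enum index_allpairs_pair ?mem_enum //.
by rewrite !index_enum_ord size_enum_ord.
Qed.

Lemma vec_mx_mul_tensmx (R : comPzRingType) m n p q (v : 'rV[R]_(m * n))
    (X1 : 'M[R]_(m, p)) (X2 : 'M[R]_(n, q)) :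
  vec_mx (v *m (X1 *t X2)) = X1^T *m vec_mx v *m X2.
Proof.
apply/matrixP => k l; rewrite mxE mxvec_mxtens_index mxE.
rewrite (reindex (@mxtens_index m n)) /=; last first.
  exists (@mxtens_unindex m n) => ? _;
  by rewrite (mxtens_indexK, mxtens_unindexK).
pose F i j := v 0 (mxtens_index (i, j)) * (X1 i k * X2 j l).
rewrite (eq_bigr (fun ij => F ij.1 ij.2)).
  rewrite -pair_bigA mxE exchange_big /=; apply: eq_bigr => j _.
  rewrite !mxE mulr_suml; apply: eq_bigr => i _.
  by rewrite /F !mxE mxvec_mxtens_index mulrCA mulrA.
by case=> i j _; rewrite tensmxE.
Qed.

Lemma eigenvalue_vec_mxP (F : fieldType) m n (T : 'M[F]_(m * n))
    (f : 'M[F]_(m, n) -> 'M[F]_(m, n)) l :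
  (forall v, vec_mx (v *m T) = f (vec_mx v)) ->
  reflect (exists2 Y, Y != 0 & f Y = l *: Y) (eigenvalue T l).
Proof.
move=> vecT; apply: (iffP eigenvalueP) => [[v vT v0] | [Y Y0 fY]].
  by exists (vec_mx v); rewrite ?vec_mx_eq0 // -vecT vT linearZ.
exists (mxvec Y); last by rewrite mxvec_eq0.
by apply: (can_inj vec_mxK); rewrite vecT mxvecK fY linearZ /= mxvecK.
Qed.

Section DotProductMean.
Variables (C : numClosedFieldType) (U : vectType C).
Variable form : {dot U for Num.conj}.
Local Notation "''[' u , v ]" := (form u v).
Local Notation "''[' u ]" := (form u u).

Lemma normr_dot_le_mean p q a : '[p] <= a -> `|'[p, q]| <= (a + '[q]) / 2.
Proof.
move=> pa; have a_ge0 : 0 <= a := le_trans (dnorm_ge0 form p) pa.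
have q_ge0 := dnorm_ge0 form q.
rewrite -(ler_pXn2r (_ : (0 < 2)%N)) ?nnegrE ?divr_ge0 ?addr_ge0 //.
apply: le_trans (CauchySchwarz form p q) _.
apply: le_trans (ler_wpM2r q_ge0 pa) _.
rewrite -subr_ge0 (_ : _ - _ = ((a - '[q]) / 2) ^+ 2); last first.
  by rewrite !expr2; field.
by rewrite -realEsqr rpredM ?rpredB ?rpredV ?ger0_real.
Qed.

End DotProductMean.

Section Adjoint.
Variable C : numClosedFieldType.

Lemma mxadjK m n (X : 'M[C]_(m, n)) : mxadj (mxadj X) = X.
Proof. by apply/matrixP => i j; rewrite !mxE conjCK. Qed.

Lemma mxadj_mul m n p (X : 'M[C]_(m, n)) (Y : 'M[C]_(n, p)) :
  mxadj (X *m Y) = mxadj Y *m mxadj X.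
Proof. by rewrite /mxadj /mxconj map_mxM trmx_mul. Qed.

Lemma mxadjD m n (X Y : 'M[C]_(m, n)) : mxadj (X + Y) = mxadj X + mxadj Y.
Proof. by apply/matrixP => i j; rewrite !mxE rmorphD. Qed.

Lemma mxadj_sum m n I (r : seq I) (P : pred I) (F : I -> 'M[C]_(m, n)) :
  mxadj (\sum_(i <- r | P i) F i) = \sum_(i <- r | P i) mxadj (F i).
Proof.
apply: (big_morph _ (@mxadjD m n)).
by apply/matrixP => i j; rewrite !mxE rmorph0.
Qed.

Lemma mxadj_trC m n (X : 'M[C]_(m, n)) : mxadj X = (X ^t* )%sesqui.
Proof. by rewrite /mxadj /mxconj map_trmx. Qed.

Lemma mxadj_scalar_real n (b : C) :
  mxadj (b%:M : 'M[C]_n.+1) = b%:M -> b \is Num.real.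
Proof. by move/matrixP/(_ 0 0); rewrite !mxE eqxx mulr1n => /CrealP. Qed.

End Adjoint.

Section RowDot.
Variable C : numClosedFieldType.
Local Notation "''[' u , v ]" := (@dotmx C _ u v).
Local Notation "''[' u ]" := '[u, u].

Lemma dotmx_mxadj n (x y : 'rV[C]_n) : '[x, y] = (x *m mxadj y) 0 0.
Proof. by rewrite dotmxE mxadj_trC. Qed.

Lemma dotmx_ge0 n (x : 'rV[C]_n) : 0 <= '[x].
Proof. exact: dnorm_ge0. Qed.

Lemma dotmx_eq0 n (x : 'rV[C]_n) : ('[x] == 0) = (x == 0).
Proof. exact: dnorm_eq0. Qed.

Lemma dotmx_gt0 n (x : 'rV[C]_n) : (0 < '[x]) = (x != 0).
Proof. exact: dnorm_gt0. Qed.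

Lemma dotmxC n (x y : 'rV[C]_n) : '[y, x] = '[x, y]^*.
Proof. by rewrite hermC expr0 mul1r. Qed.

Lemma dotmx_mulmxl n p (x : 'rV[C]_n) (K : 'M[C]_(n, p)) y :
  '[x *m K, y] = '[x, y *m mxadj K].
Proof. by rewrite !dotmx_mxadj mxadj_mul mxadjK mulmxA. Qed.

Lemma dotmx_scalar n (x : 'rV[C]_n) b : '[x *m b%:M, x] = b * '[x].
Proof. by rewrite mul_mx_scalar !dotmx_mxadj -scalemxAl mxE. Qed.

Lemma dotmx_mxadj_real n (H : 'M[C]_n) x :
  mxadj H = H -> '[x *m H, x] \is Num.real.
Proof. by move=> hH; apply/CrealP; rewrite -dotmxC dotmx_mulmxl hH. Qed.

Lemma hermitian_max_eigenvector n (H : 'M[C]_n.+1) : mxadj H = H ->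
  exists s (u : 'rV_n.+1), [/\ '[u] = 1, u *m H = s *: u &
    forall x, '[x *m H, x] <= s * '[x]].
Proof.
move=> hH; pose P := spectralmx H; pose sg := spectral_diag H.
have P_unitary : P \is unitarymx by exact: spectral_unitarymx.
have PPadj : P *m mxadj P = 1%:M by rewrite mxadj_trC; apply/unitarymxP.
have PadjP : mxadj P *m P = 1%:M by apply: mulmx1C.
have H_normal : H \is normalmx by apply/normalmxP; rewrite -mxadj_trC hH.
have HE : H = mxadj P *m diag_mx sg *m P.
  by rewrite [LHS](orthomx_spectralP H_normal) invmx_unitary // mxadj_trC.
have rowP_unit i : '[row i P] = 1.
  by move/row_unitarymxP: P_unitary => /(_ i i); rewrite eqxx.
have rowP_eig i : row i P *m H = sg 0 i *: row i P.
  by rewrite HE !mulmxA -row_mul PPadj row1 -rowE row_diag_mx -scalemxAl -rowE.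
have sgE i : sg 0 i = '[row i P *m H, row i P].
  by rewrite rowP_eig linearZl_LR /= rowP_unit mulr1.
have sg_real j : sg 0 j \is Num.real by rewrite sgE dotmx_mxadj_real.
have [i _ sg_max] := @real_arg_maxP _ _ ord0 predT (fun j => sg 0 j) erefl
  (fun j _ => sg_real j).
exists (sg 0 i), (row i P); split => // x.
(* With z = x P^*, '[x H, x] = \sum_j sg_j |z_j|^2 and '[x] = '[z]. *)
rewrite -[in leRHS](_ : '[x *m mxadj P] = '[x]); last first.
  by rewrite dotmx_mulmxl mxadjK -mulmxA PadjP mulmx1.
rewrite HE mulmxA dotmx_mulmxl mulmxA.
rewrite !dotmx_mxadj mul_mx_diag !mxE mulr_sumr; apply: ler_sum => j _.
rewrite !mxE mulrAC [leRHS]mulrC ler_wpM2l ?mul_conjC_ge0 //.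
exact: sg_max.
Qed.

Lemma top_singular_vector n p (Y : 'M[C]_(n.+1, p)) : Y != 0 ->
  exists s (u : 'rV_n.+1), [/\ 0 < s, '[u] = 1, '[u *m Y] = s,
    u *m (Y *m mxadj Y) = s *: u & forall x, '[x *m Y] <= s * '[x]].
Proof.
move=> Y0; have gram_adj : mxadj (Y *m mxadj Y) = Y *m mxadj Y.
  by rewrite mxadj_mul mxadjK.
have gramE x : '[x *m (Y *m mxadj Y), x] = '[x *m Y].
  by rewrite mulmxA dotmx_mulmxl mxadjK.
have [s [u [u1 uYY s_max]]] := hermitian_max_eigenvector gram_adj.
have uY : '[u *m Y] = s by rewrite -gramE uYY linearZl_LR /= u1 mulr1.
have bound x : '[x *m Y] <= s * '[x] by rewrite -gramE.
exists s, u; split => //.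
have s_ge0 : 0 <= s by rewrite -uY dotmx_ge0.
rewrite lt_def s_ge0 andbT; apply: contra Y0 => /eqP s0.
apply/eqP/row_matrixP => k; apply/eqP.
rewrite row0 rowE -dotmx_eq0 eq_le dotmx_ge0 andbT.
by rewrite -(mul0r '['e_k]) -s0 bound.
Qed.

Section SandwichBound.
Variables (n : nat) (Y : 'M[C]_n) (s : C).
Hypothesis Y_bound : forall x, '[x *m Y] <= s * '[x].

Lemma normr_dotmx_sandwich_le (X : 'M[C]_n) u :
  `|'[u *m (mxadj X *m Y *m X), u *m Y]|
    <= (s * '[u *m mxadj X] + '[u *m Y *m mxadj X]) / 2.
Proof.
rewrite !mulmxA dotmx_mulmxl.
exact: (@normr_dot_le_mean C _ (@dotmx C n) _ _ _ (Y_bound _)).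
Qed.

Lemma normr_dotmx_sandwich_sum_le I (r : seq I) (X : I -> 'M[C]_n) u :
  `|'[u *m \sum_(i <- r) mxadj (X i) *m Y *m X i, u *m Y]|
    <= (s * \sum_(i <- r) '[u *m mxadj (X i)]
        + \sum_(i <- r) '[u *m Y *m mxadj (X i)]) / 2.
Proof.
rewrite mulmx_sumr linear_sumlz mulr_sumr -big_split mulr_suml /=.
apply: le_trans (ler_norm_sum _ _ _) _; apply: ler_sum => i _.
exact: normr_dotmx_sandwich_le.
Qed.

End SandwichBound.

End RowDot.

Section GeneralizedLyapunov.
Variables (C : numClosedFieldType) (n m : nat).
Variables (A : 'M[C]_n.+1) (B : 'I_m -> 'M[C]_n.+1).
Local Notation "''[' u , v ]" := (@dotmx C _ u v).
Local Notation "''[' u ]" := '[u, u].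

Definition D_AB_op (Y : 'M[C]_n.+1) :=
  mxadj A *m Y *m A + \sum_(k < m) mxadj (B k) *m Y *m B k.

Definition C_AB_op (Y : 'M[C]_n.+1) :=
  mxadj A *m Y + Y *m A + \sum_(k < m) mxadj (B k) *m Y *m B k.

Lemma vec_mx_D_AB v : vec_mx (v *m D_AB A B) = D_AB_op (vec_mx v).
Proof.
rewrite mulmxDr mulmx_sumr linearD linear_sum /= vec_mx_mul_tensmx.
by under eq_bigr do rewrite vec_mx_mul_tensmx.
Qed.

Lemma vec_mx_C_AB v : vec_mx (v *m C_AB A B) = C_AB_op (vec_mx v).
Proof.
rewrite !mulmxDr mulmx_sumr !linearD linear_sum /= !vec_mx_mul_tensmx.
rewrite trmx1 mul1mx mulmx1.
by under eq_bigr do rewrite vec_mx_mul_tensmx.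
Qed.

Lemma dotmx_N_AB x :
  '[x *m N_AB A B, x] = '[x *m mxadj A] + \sum_(k < m) '[x *m mxadj (B k)].
Proof.
rewrite mulmxDr mulmx_sumr linearDl linear_sumlz /= mulmxA dotmx_mulmxl.
by under eq_bigr do rewrite mulmxA dotmx_mulmxl.
Qed.

Lemma dotmx_M_AB x :
  '[x *m M_AB A B, x]
    = 'Re '[x *m A, x] *+ 2 + \sum_(k < m) '[x *m mxadj (B k)].
Proof.
rewrite !mulmxDr mulmx_sumr !linearDl linear_sumlz /=.
rewrite (dotmx_mulmxl x (mxadj A)) mxadjK (dotmxC (x *m A)).
rewrite ReE -mulr_natr divfK ?pnatr_eq0 //; congr (_ + _).
by under eq_bigr do rewrite mulmxA dotmx_mulmxl.
Qed.

Lemma mxadj_M_AB : mxadj (M_AB A B) = M_AB A B.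
Proof.
rewrite !mxadjD mxadjK mxadj_sum [mxadj A + A]addrC.
by under eq_bigr do rewrite mxadj_mul mxadjK.
Qed.

Lemma spectral_radius_D_AB beta :
  N_AB A B = beta%:M -> spectral_radius_is (D_AB A B) beta.
Proof.
move=> Nbeta; have N_form x :
    beta * '[x] = '[x *m mxadj A] + \sum_(k < m) '[x *m mxadj (B k)].
  by rewrite -dotmx_scalar -Nbeta dotmx_N_AB.
have beta_ge0 : 0 <= beta.
  have e0_gt0 : 0 < '['e_0 : 'rV[C]_n.+1].
    rewrite dotmx_gt0; apply/eqP => /rowP/(_ 0).
    by rewrite !mxE eqxx; apply/eqP/oner_neq0.
  rewrite -(pmulr_lge0 _ e0_gt0) N_form addr_ge0 ?dotmx_ge0 //.
  by apply: sumr_ge0 => k _; apply: dotmx_ge0.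
split.
  exists beta; last exact: ger0_norm.
  apply/(eigenvalue_vec_mxP _ vec_mx_D_AB); exists 1%:M; first exact: oner_neq0.
  rewrite /D_AB_op scalemx1 -Nbeta mulmx1.
  by under eq_bigr do rewrite mulmx1.
move=> l /(eigenvalue_vec_mxP _ vec_mx_D_AB) [Y Y0 DY].
have [s [u [s_gt0 u1 uY _ Y_bound]]] := top_singular_vector Y0.
have lsE : l * s = '[u *m D_AB_op Y, u *m Y].
  by rewrite DY -scalemxAr linearZl_LR /= uY.
rewrite -(ler_pM2r s_gt0) -[s in `|l| * s](ger0_norm (ltW s_gt0)) -normrM lsE.
rewrite mulmxDr linearDl /=; apply: le_trans (ler_normD _ _) _.
apply: le_trans (lerD (normr_dotmx_sandwich_le Y_bound _ _)
  (normr_dotmx_sandwich_sum_le Y_bound _ _ _)) _.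
rewrite -mulrDl addrACA -mulrDr -!N_form u1 uY mulr1 [s * _]mulrC -mulr2n.
by rewrite -[_ *+ 2]mulr_natr mulfK ?pnatr_eq0.
Qed.

Lemma spectral_abscissa_C_AB beta :
  M_AB A B = beta%:M -> spectral_abscissa_is (C_AB A B) beta.
Proof.
move=> Mbeta; have M_form x :
    beta * '[x] = 'Re '[x *m A, x] *+ 2 + \sum_(k < m) '[x *m mxadj (B k)].
  by rewrite -dotmx_scalar -Mbeta dotmx_M_AB.
have beta_real : beta \is Num.real.
  by apply: (@mxadj_scalar_real _ n); rewrite -Mbeta mxadj_M_AB.
split.
  exists beta; last exact/Creal_ReP.
  apply/(eigenvalue_vec_mxP _ vec_mx_C_AB); exists 1%:M; first exact: oner_neq0.
  rewrite /C_AB_op scalemx1 -Mbeta mulmx1 mul1mx [_ + A]addrC.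
  by under eq_bigr do rewrite mulmx1.
move=> l /(eigenvalue_vec_mxP _ vec_mx_C_AB) [Y Y0 CY].
have [s [u [s_gt0 u1 uY uYY Y_bound]]] := top_singular_vector Y0.
have s_real : s \is Num.real by rewrite gtr0_real.
have lsE : l * s = '[u *m C_AB_op Y, u *m Y].
  by rewrite CY -scalemxAr linearZl_LR /= uY.
have A_term : '[u *m (mxadj A *m Y), u *m Y] = s * '[u *m A, u]^*.
  rewrite mulmxA dotmx_mulmxl -mulmxA uYY linearZr_LR /= (conj_Creal s_real).
  by rewrite dotmx_mulmxl mxadjK dotmxC.
rewrite -(ler_pM2r s_gt0) -ReMr // lsE !mulmxDr !linearDl /= A_term mulmxA.
rewrite !raddfD /= ReMl // Re_conj.
apply: le_trans (lerD (lexx _) (le_trans (leif_Re_Creal _).1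
  (normr_dotmx_sandwich_sum_le Y_bound _ _ _))) _.
have -> : beta * s = (s * (beta * '[u]) + beta * '[u *m Y]) / 2.
  by rewrite u1 uY; field.
by rewrite !M_form -subr_ge0 !mulr2n (_ : _ - _ = 0) ?lexx //; field.
Qed.

End GeneralizedLyapunov.

Theorem corollary1p2 (C : numClosedFieldType) (d m : nat)
  (A : 'M[C]_d.+1) (B : 'I_m -> 'M[C]_d.+1) :
  (forall beta : C, N_AB A B = beta%:M -> spectral_radius_is (D_AB A B) beta) /\
  (forall beta : C, M_AB A B = beta%:M -> spectral_abscissa_is (C_AB A B) beta).
Proof.
split=> beta; [exact: spectral_radius_D_AB | exact: spectral_abscissa_C_AB].
Qed.
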